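(* Let $U,V$ be nonempty finite words over the alphabet $\{-1,1\}$ and let $W=w_1\cdots w_\ell$ ($\ell\ge1$) be a word over the two-letter alphabet $\{U,V\}$; let $X=w_\ell\cdots w_1$ be the reversed word over $\{U,V\}$. Let $\widetilde W,\widetilde X\in\{-1,1\}^N$ be the words over $\{-1,1\}$ obtained by concatenating the words $U,V$ as they appear in $W$, resp. $X$, where $N=|W|_U|U|+|W|_V|V|$, and regard them as elements of $G_F$, $F=\mathbb Z/N\mathbb Z$. Then $A_F(\widetilde X)=A_F(\widetilde W)$.
   Context: $|W|_U$ denotes the number of occurrences of the letter $U$ in $W$, and $|U|$ the length of $U$. A word $v_1\cdots v_N$ over $\{-1,1\}$ is identified with $\sigma\in G_F=\{-1,1\}^{\mathbb Z/N\mathbb Z}$ by $\sigma_i=v_i$ (indices mod $N$). The correlation map is $A_F(\sigma)_f=\sum_{m\in F}\sigma_m\sigma_{m+f}$. *)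

From mathcomp Require Import all_boot all_order all_algebra.
Set Implicit Arguments. Unset Strict Implicit. Unset Printing Implicit Defensive.
Import GRing.Theory Num.Theory.
Local Open Scope ring_scope.

Definition pm1_word (s : seq int) : bool := all (fun x => (x == 1) || (x == -1)) s.

(* A word over the two-letter alphabet {U,V}: true encodes U, false encodes V.
   [subst_word U V W] concatenates U and V as they appear in W. *)
Definition subst_word (U V : seq int) (W : seq bool) : seq int :=
  flatten [seq (if b then U else V) | b <- W].

(* Periodic correlation over F = Z/NZ, N = size s, with sigma_i = s_(i mod N):
   A_F(sigma)_f = sum_{m in Z/NZ} sigma_m sigma_{m+f}. *)
Definition corr (s : seq int) (f : nat) : int :=
  let N := size s in \sum_(m < N) s`_m * s`_((m + f) %% N)%N.

(* Cut [subst_word U V W] into its cyclic sequence of blocks, each U or V.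
   The correlation at shift f becomes a sum, over pairs of blocks k and k + j,
   of a term determined by the letters w_k, w_(k+j) and by the number of U's
   among w_k, ..., w_(k+j), because that number fixes the distance between
   the two blocks.  Reversing W maps the window w_k ... w_(k+j) to a window
   with the same number of U's but with its first and last letters exchanged.
   So it suffices that, for fixed j, the sums over k of w_k K(c_k) and of
   w_(k+j) K(c_k) agree, c_k being the number of U's in the window at k.  With
   H a discrete antiderivative of K these terms are H(c_k) minus H of the
   U-count of the j-letter window starting at k + 1, resp. at k, and those two
   counts have the same cyclic sum. *)

From mathcomp Require Import all_boot all_order all_algebra.
From mathcomp Require Import zify ring.
Set Implicit Arguments. Unset Strict Implicit. Unset Printing Implicit Defensive.
Import GRing.Theory Num.Theory.

Lemma big_ord_shift_periodic (R : Type) (idx : R) (op : Monoid.com_law idx)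
    (n m : nat) (F : nat -> R) :
  (forall k, F (k + n) = F k) ->
  \big[op/idx]_(k < n) F (k + m) = \big[op/idx]_(k < n) F k.
Proof.
move=> Fper; elim: m => [|m IHm]; first by under eq_bigr do rewrite addn0.
rewrite -{}IHm; case: n Fper => [|n] Fper; first by rewrite !big_ord0.
rewrite big_ord_recr big_ord_recl /= Monoid.mulmC -addSnnS -[n.+1 + m]addnC Fper.
by congr (op _ _); apply: eq_bigr => i _; rewrite addSnnS.
Qed.

Section CyclicWord.

Variable W : seq bool.
Local Notation n := (size W).

Definition cnth (k : nat) : bool := nth false W (k %% n).

Definition wcount (k r : nat) : nat := \sum_(i < r) cnth (k + i).

Lemma cnthDsize k : cnth (k + n) = cnth k.
Proof. by rewrite /cnth modnDr. Qed.

Lemma wcountDsize k r : wcount (k + n) r = wcount k r.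
Proof. by apply: eq_bigr => i _; rewrite addnAC cnthDsize. Qed.

Lemma wcountSl k r : wcount k r.+1 = cnth k + wcount k.+1 r.
Proof.
rewrite /wcount big_ord_recl addn0; congr (_ + _).
by apply: eq_bigr => i _; rewrite addSnnS.
Qed.

Lemma wcountSr k r : wcount k r.+1 = wcount k r + cnth (k + r).
Proof. by rewrite /wcount big_ord_recr. Qed.

Lemma wcount_le k r : wcount k r <= r.
Proof.
elim: r => [|r IHr]; first by rewrite /wcount big_ord0.
by rewrite wcountSr; case: cnth => /=; lia.
Qed.

Local Open Scope ring_scope.

Lemma sum_first_last_weight (r : nat) (K : nat -> int) :
  \sum_(k < n) (cnth k)%:R * K (wcount k r.+1) =
  \sum_(k < n) (cnth (k + r))%:R * K (wcount k r.+1).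
Proof.
(* [b * K (d + b) = H (d + b) - H d] for a letter [b], whence telescoping. *)
pose H x := \sum_(i < x) K i.+1.
have HS (b : bool) d : b%:R * K (d + b)%N = H (d + b)%N - H d.
  case: b; first by rewrite addn1 /H big_ord_recr /= addrAC subrr add0r mul1r.
  by rewrite addn0 subrr mul0r.
transitivity (\sum_(k < n) (H (wcount k r.+1) - H (wcount k.+1 r))).
  by apply: eq_bigr => k _; rewrite wcountSl addnC HS.
transitivity (\sum_(k < n) (H (wcount k r.+1) - H (wcount k r))); last first.
  by apply: eq_bigr => k _; rewrite wcountSr HS.
rewrite !sumrB -(@big_ord_shift_periodic _ _ +%R n 1 (fun k => H (wcount k r))) => [|k].
  by congr (_ - _); apply: eq_bigr => k _; rewrite addn1.
by rewrite /= (wcountDsize k r).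
Qed.

Lemma sum_window_swap_ends (r : nat) (F : bool -> bool -> nat -> int) :
  \sum_(k < n) F (cnth k) (cnth (k + r)) (wcount k r.+1) =
  \sum_(k < n) F (cnth (k + r)) (cnth k) (wcount k r.+1).
Proof.
pose D c := F true false c - F false true c.
have swap x y c : F x y c = F y x c + (x%:R - y%:R) * D c.
  by case: x; case: y; rewrite /D /=; ring.
under eq_bigr do rewrite swap mulrBl.
by rewrite big_split sumrB /= sum_first_last_weight subrr addr0.
Qed.

End CyclicWord.

Section Reversal.

Variable W : seq bool.
Local Notation n := (size W).
Hypothesis W_gt0 : 0 < n.

Lemma cnth_rev a b : n %| (a + b).+1 -> cnth (rev W) a = cnth W b.
Proof.
rewrite /dvdn => /eqP ab0; rewrite /cnth size_rev nth_rev ?ltn_pmod //; congr nth.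
have := ltn_pmod a W_gt0; have := ltn_pmod b W_gt0.
set x := (a %% n + b %% n).+1.
have x0 : x %% n = 0 by rewrite /x -addn1 -modnDml modnDm modnDml addn1.
case: (ltnP x n) => [xn | nx]; first by move: x0; rewrite modn_small // /x.
move: x0; rewrite -(subnKC nx) modnDl modn_small /x; lia.
Qed.

Lemma wcount_rev k l r : n %| (k + l + r).+1 ->
  wcount (rev W) k r.+1 = wcount W l r.+1.
Proof.
move=> klr; rewrite /wcount (reindex_inj rev_ord_inj); apply: eq_bigr => i _.
congr nat_of_bool; apply: cnth_rev.
by rewrite /= (_ : (k + _ + _).+1 = (k + l + r).+1) //; have := ltn_ord i; lia.
Qed.

Local Open Scope ring_scope.

Lemma sum_window_rev (r : nat) (F : bool -> bool -> nat -> int) :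
  \sum_(k < n) F (cnth (rev W) k) (cnth (rev W) (k + r)) (wcount (rev W) k r.+1) =
  \sum_(k < n) F (cnth W (k + r)) (cnth W k) (wcount W k r.+1).
Proof.
pose G k := F (cnth (rev W) k) (cnth (rev W) (k + r)) (wcount (rev W) k r.+1).
have G_periodic k : G (k + n)%N = G k.
  by rewrite /G -(size_rev W) addnAC !cnthDsize wcountDsize.
(* Position k + r (n - 1) of [rev W] mirrors position n - k.+1 of [W]:
   with the window length r + 1 they add up to (r + 1) n. *)
rewrite -(big_ord_shift_periodic _ (r * n.-1) G_periodic).
rewrite [RHS](reindex_inj rev_ord_inj); apply: eq_bigr => k _ /=.
have lt_kn := ltn_ord k.
by congr F; [apply: cnth_rev | apply: cnth_rev | apply: wcount_rev];
  apply/dvdnP; exists r.+1; nia.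
Qed.

End Reversal.

(* The products x_a y_b counted by the correlation at shift f when block y
   ends e positions after the start of block x. *)
Definition cross (x y : seq int) (e f : nat) : int :=
  (\sum_(a < size x) \sum_(b < size y)
     (e + b == a + f + size y)%N%:R * (x`_a * y`_b))%R.

Section Blocks.

Variables (n : nat) (B : nat -> seq int).
Hypothesis n_gt0 : 0 < n.
Hypothesis B_periodic : forall k, B (k + n) = B k.

Local Notation s := (flatten (mkseq B n)).

Definition blocks_size k r := \sum_(i < r) size (B (k + i)).

Local Notation N := (blocks_size 0 n).

Lemma blocks_sizeD k r1 r2 :
  blocks_size k (r1 + r2) = blocks_size k r1 + blocks_size (k + r1) r2.
Proof.
by rewrite /blocks_size big_split_ord; congr addn; apply: eq_bigr => i _; rewrite addnA.
Qed.

Lemma blocks_sizeS k r : blocks_size k r.+1 = blocks_size k r + size (B (k + r)).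
Proof. by rewrite /blocks_size big_ord_recr. Qed.

Lemma blocks_size_periodic k : blocks_size k n = N.
Proof.
transitivity (\sum_(i < n) size (B (i + k))).
  by apply: eq_bigr => i _; rewrite addnC.
apply: (big_ord_shift_periodic _ k (F := fun i => size (B i))) => i.
by rewrite B_periodic.
Qed.

Lemma blocks_size0_mulD q r : blocks_size 0 (q * n + r) = q * N + blocks_size 0 r.
Proof.
elim: q => [|q IHq] //.
rewrite !mulSn -!addnA blocks_sizeD add0n -IHq; congr addn.
by apply: eq_bigr => i _; rewrite addnC B_periodic.
Qed.

Lemma B_modn k : B (k %% n) = B k.
Proof.
rewrite {2}(divn_eq k n) addnC; elim: (k %/ n) => [|q IHq]; first by rewrite mul0n addn0.
by rewrite mulSnr addnA B_periodic.
Qed.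

Lemma size_block_le k : size (B k) <= N.
Proof.
rewrite -(blocks_size_periodic k) -(subnKC n_gt0) blocks_sizeD.
by rewrite /blocks_size big_ord1 addn0 leq_addr.
Qed.

Lemma size_blocks : size s = N.
Proof.
rewrite size_flatten /shape -map_comp sumnE big_map -[in iota 0 n](subn0 n) big_mkord.
by apply: eq_bigr => i _; rewrite add0n.
Qed.

Local Open Scope ring_scope.

Lemma nth_blocks_small r a : (r < n)%N -> (a < size (B r))%N ->
  s`_(blocks_size 0 r + a)%N = (B r)`_a.
Proof.
move=> lt_rn lt_a.
have sh : shape (mkseq B n) = mkseq (size \o B) n by rewrite /shape -map_comp.
have idx : flatten_index (shape (mkseq B n)) r a = (blocks_size 0 r + a)%N.
  rewrite /flatten_index sh /mkseq -map_take take_iota (minn_idPl (ltnW lt_rn)).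
  rewrite sumnE big_map -[in iota 0 r](subn0 r) big_mkord.
  by congr addn; apply: eq_bigr => i _; rewrite add0n.
have lt_a' : (a < nth 0 (shape (mkseq B n)) r)%N by rewrite sh nth_mkseq.
by rewrite -idx nth_flatten flatten_indexKl // flatten_indexKr // nth_mkseq.
Qed.

Lemma nth_blocks k a : (a < size (B k))%N ->
  s`_((blocks_size 0 k + a) %% N) = (B k)`_a.
Proof.
move=> lt_a; rewrite -B_modn in lt_a *.
rewrite {1}(divn_eq k n) blocks_size0_mulD -addnA modnMDl.
have lt_kn := ltn_pmod k n_gt0; set r := (k %% n)%N in lt_a lt_kn *.
rewrite modn_small ?nth_blocks_small //.
apply: (@leq_trans (blocks_size 0 r.+1)); first by rewrite blocks_sizeS ltn_add2l add0n.
by rewrite -(subnKC lt_kn) blocks_sizeD leq_addr.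
Qed.

Lemma sum_blocks (g : nat -> int) k J :
  \sum_(blocks_size 0 k <= m < blocks_size 0 (k + J)) g m =
  \sum_(j < J) \sum_(b < size (B (k + j))) g (blocks_size 0 (k + j) + b)%N.
Proof.
elim: J => [|J IHJ]; first by rewrite addn0 big_geq ?big_ord0.
rewrite big_ord_recr -IHJ addnS blocks_sizeS.
rewrite (big_cat_nat _ (n := blocks_size 0 (k + J))) ?leq_addr //=.
  congr (_ + _); rewrite -{1}[blocks_size 0 (k + J)]add0n big_addn addKn big_mkord.
  by apply: eq_bigr => b _; rewrite addnC.
by rewrite blocks_sizeD leq_addr.
Qed.

Lemma nth_blocks_decode k J M :
  (blocks_size 0 k <= M < blocks_size 0 (k + J))%N ->
  s`_(M %% N) =
  \sum_(j < J) \sum_(b < size (B (k + j)))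
     (blocks_size 0 (k + j) + b == M)%N%:R * (B (k + j))`_b.
Proof.
move=> M_in.
transitivity (\sum_(blocks_size 0 k <= m < blocks_size 0 (k + J))
                (m == M)%:R * s`_(m %% N)).
  under eq_bigr do rewrite mulr_natl mulrb.
  by rewrite -big_mkcond big_nat1_eq M_in.
rewrite sum_blocks; apply: eq_bigr => j _; apply: eq_bigr => b _.
by case: eqP => [_|]; rewrite ?mul0r // !mul1r nth_blocks.
Qed.

Hypothesis B_nonempty : forall k, (0 < size (B k))%N.

Lemma blocks_size_ge k r : (r <= blocks_size k r)%N.
Proof. by elim: r => [|r IHr] //; rewrite blocks_sizeS -addn1 leq_add. Qed.

Lemma nth_blocks_shift k a f : (a < size (B k))%N -> (f < N)%N ->
  s`_((blocks_size 0 k + a + f) %% N) =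
  \sum_(j < 2 * N) \sum_(b < size (B (k + j)))
     (blocks_size k j + b == a + f)%N%:R * (B (k + j))`_b.
Proof.
move=> lt_a lt_f; rewrite (nth_blocks_decode (k := k) (J := 2 * N)).
  apply: eq_bigr => j _; apply: eq_bigr => b _.
  by rewrite blocks_sizeD add0n -!addnA eqn_add2l.
have := size_block_le k; have := blocks_size_ge k (2 * N).
by rewrite blocks_sizeD add0n; lia.
Qed.

Lemma corr_blocks f : (f < N)%N ->
  corr s f =
  \sum_(k < n) \sum_(j < 2 * N) cross (B k) (B (k + j)) (blocks_size k j.+1) f.
Proof.
move=> lt_f.
transitivity (\sum_(blocks_size 0 0 <= m < blocks_size 0 (0 + n)%N)
                s`_(m %% N) * s`_((m + f) %% N)).
  have blocks_size00 : blocks_size 0 0 = 0%N by rewrite /blocks_size big_ord0.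
  rewrite /corr size_blocks blocks_size00 add0n big_mkord.
  by apply: eq_bigr => m _; rewrite (modn_small (ltn_ord m)).
rewrite sum_blocks; apply: eq_bigr => k _; rewrite !add0n.
rewrite /cross exchange_big /=; apply: eq_bigr => a _.
rewrite nth_blocks // nth_blocks_shift // mulr_sumr; apply: eq_bigr => j _.
rewrite mulr_sumr; apply: eq_bigr => b _.
by rewrite blocks_sizeS addnAC eqn_add2r mulrCA.
Qed.

End Blocks.

Definition block (U V : seq int) (b : bool) : seq int := if b then U else V.

Section SubstWord.

Variables (U V : seq int) (W : seq bool).

Local Notation blocks := (fun k => block U V (cnth W k)).

Lemma subst_word_blocks : subst_word U V W = flatten (mkseq blocks (size W)).
Proof.
rewrite /subst_word -{1}(mkseq_nth false W) /mkseq -map_comp; congr flatten.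
apply/eq_in_map => i; rewrite mem_iota add0n => /andP [_ lt_i].
by rewrite /= /cnth modn_small.
Qed.

Lemma blocks_size_subst_word k r :
  blocks_size blocks k r = wcount W k r * size U + (r - wcount W k r) * size V.
Proof.
elim: r => [|r IHr]; first by rewrite /blocks_size /wcount !big_ord0.
rewrite blocks_sizeS wcountSr IHr /block; have := wcount_le W k r.
by case: cnth => /=; nia.
Qed.

Lemma size_subst_word_rev : size (subst_word U V (rev W)) = size (subst_word U V W).
Proof. by rewrite /subst_word !size_flatten /shape !map_rev sumn_rev. Qed.

End SubstWord.

Local Open Scope ring_scope.

Definition window_cross (U V : seq int) (f r : nat) (x y : bool) (c : nat) : int :=
  cross (block U V x) (block U V y) (c * size U + (r - c) * size V) f.

Lemma corr_subst_word (U V : seq int) (W : seq bool) (f : nat) :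
  (0 < size U)%N -> (0 < size V)%N -> (0 < size W)%N ->
  (f < size (subst_word U V W))%N ->
  corr (subst_word U V W) f =
  \sum_(j < 2 * size (subst_word U V W)) \sum_(k < size W)
     window_cross U V f j.+1 (cnth W k) (cnth W (k + j)) (wcount W k j.+1).
Proof.
move=> U_gt0 V_gt0 W_gt0; rewrite subst_word_blocks size_blocks => lt_f.
rewrite corr_blocks // => [|k|k]; last 2 first.
- by rewrite /block cnthDsize.
- by rewrite /block; case: cnth.
rewrite exchange_big; apply: eq_bigr => j _; apply: eq_bigr => k _.
by rewrite /window_cross -blocks_size_subst_word.
Qed.

Theorem mainTheorem8 (U V : seq int) (W : seq bool) :
  pm1_word U -> pm1_word V -> (0 < size U)%N -> (0 < size V)%N ->
  (0 < size W)%N ->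
  forall f : nat, (f < size (subst_word U V W))%N ->
    corr (subst_word U V (rev W)) f = corr (subst_word U V W) f.
Proof.
move=> _ _ U_gt0 V_gt0 W_gt0 f lt_f.
have lt_f' := lt_f; rewrite -size_subst_word_rev in lt_f'.
rewrite corr_subst_word ?size_rev // corr_subst_word // size_subst_word_rev.
by apply: eq_bigr => j _; rewrite sum_window_rev // sum_window_swap_ends.
Qed.
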